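(* There is an absolute constant $C$ such that for all $x\ge0$, $s>0$, $\sigma\in(1/2,1)$ and $\rho\ge1$, with $T=T(s,\sigma)$ and $F_\pm$ as in the context, \[\sup_{0<t\le T}|F_\pm(t)|\le C(s+1)\qquad\text{and}\qquad\|F_\pm\|_{v(\rho),(0,T]}\le C(s+1),\] where the variation is taken in the variable $t$.
   Context: Fix $x\ge0$, $s>0$, $\sigma\in(1/2,1)$. Let $Q_s(t)=x(e^t-1)-s\sqrt{e^{2t}-1}$ and $T=T(s,\sigma)=\sup\{t\in(0,1]:\ Q_s(t)<\sigma/(1+x)\}$. For $0<t\le1$ define \[F_\pm(t)=\frac{\bigl|x(e^t-1)\pm s\sqrt{e^{2t}-1}\bigr|\wedge\frac{\sigma}{1+x}}{\sqrt{1-e^{-2t}}},\] where $a\wedge b=\min(a,b)$. For $1\le\rho<\infty$ and an interval $I$, $\|\phi\|_{v(\rho),I}=\sup(\sum_{i=1}^n|\phi(t_i)-\phi(t_{i-1})|^\rho)^{1/\rho}$ over finite increasing sequences in $I$. *)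

From HB Require Import structures.
From mathcomp Require Import all_boot all_order all_algebra.
From mathcomp Require Import all_classical all_reals all_analysis.
Set Implicit Arguments. Unset Strict Implicit. Unset Printing Implicit Defensive.
Import Order.TTheory GRing.Theory Num.Theory.
Local Open Scope classical_set_scope.
Local Open Scope ring_scope.

Section Defs.
Variable R : realType.

Definition Qs (x s t : R) : R :=
  x * (expR t - 1) - s * Num.sqrt (expR (2 * t) - 1).

Definition Tcut (x s sigma : R) : R :=
  sup [set t : R | 0 < t <= 1 /\ Qs x s t < sigma / (1 + x)].

Definition Fplus (x s sigma t : R) : R :=
  Num.min `|x * (expR t - 1) + s * Num.sqrt (expR (2 * t) - 1)| (sigma / (1 + x))
  / Num.sqrt (1 - expR (- (2 * t))).

Definition Fminus (x s sigma t : R) : R :=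
  Num.min `|x * (expR t - 1) - s * Num.sqrt (expR (2 * t) - 1)| (sigma / (1 + x))
  / Num.sqrt (1 - expR (- (2 * t))).

Definition pvar (rho : R) (phi : R -> R) (I : set R) : \bar R :=
  ereal_sup [set y : \bar R | exists (n : nat) (t : nat -> R),
    (forall i : nat, (i <= n)%N -> I (t i)) /\
    (forall i : nat, (i < n)%N -> t i < t i.+1) /\
    y = ((\sum_(i < n) `|phi (t i.+1) - phi (t i)| `^ rho) `^ rho^-1)%:E].

Definition supabs (phi : R -> R) (I : set R) : \bar R :=
  ereal_sup [set `|phi t|%:E | t in I].

End Defs.

From HB Require Import structures.
From mathcomp Require Import all_boot all_order all_algebra.
From mathcomp Require Import all_classical all_reals all_analysis.
From mathcomp Require Import ring lra.
Set Implicit Arguments. Unset Strict Implicit. Unset Printing Implicit Defensive.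
Import Order.TTheory GRing.Theory Num.Theory.
Local Open Scope ring_scope.

(* With D(t) = sqrt(1 - e^{-2t}) one has sqrt(e^{2t} - 1) = D(t) e^t, hence
     F_pm(t) = min(|g(t) pm d(t)|, c(t)),
   where the growth g = x (e^t - 1)/D and the drift d = s e^t are nondecreasing
   and the cap c = sigma/((1 + x) D) is nonincreasing in t.  Since g c <= e^t,
   min(g, c) <= e on (0, 1], so 0 <= F_pm <= e (s + 1); and T <= 1.

   For the variation, the rho-sum is dominated by the 1-sum when rho >= 1, and
   a sequence with values in [0, M] has total variation at most twice its
   positive variation plus M.  A minimum against a nonincreasing cap increases
   only where it is attained by its other argument; this bounds the positive
   variation of min(a - b, h) (a, b nondecreasing) both by the increase of a
   and by sup m + sup b.  F_+ is such a minimum, and F_- = max(u^+, v^+) with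
   u = min(g - d, c), v = min(d - g, c). *)

Section PositiveVariation.
Variable R : realDomainType.
Implicit Types a b d : R.

Definition posp d : R := Num.max d 0.

Lemma posp_cases d : (0 <= d /\ posp d = d) \/ (d <= 0 /\ posp d = 0).
Proof. by rewrite /posp; case: (leP d 0) => h; [right|left; split => //; exact: ltW]. Qed.

Lemma abs_posp d : `|d| = 2 * posp d - d.
Proof.
case: (posp_cases d) => -[hd ->]; first by rewrite ger0_norm //; ring.
by rewrite ler0_norm //; ring.
Qed.

Lemma var_le_posvar (m : nat -> R) n (M : R) :
  (forall k, (k <= n)%N -> 0 <= m k <= M) ->
  \sum_(i < n) `|m i.+1 - m i| <= 2 * \sum_(i < n) posp (m i.+1 - m i) + M.
Proof.
move=> hm.
under eq_bigr do rewrite abs_posp.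
rewrite sumrB -mulr_sumr.
have -> : \sum_(i < n) (m i.+1 - m i) = m n - m 0%N.
  by rewrite -(big_mkord xpredT (fun i => m i.+1 - m i)) telescope_sumr.
have /andP[? ?] := hm n (leqnn n); have /andP[? ?] := hm 0%N (leq0n n); lra.
Qed.

(* A minimum against a nonincreasing cap can only go up at a step where it is
   attained by the other argument, and then by no more than that argument. *)
Lemma min_step_cases (c0 c1 h0 h1 : R) : h1 <= h0 ->
  Num.min c1 h1 <= Num.min c0 h0 \/
  Num.min c0 h0 = c0 /\ Num.min c1 h1 <= c1.
Proof.
move=> h10; case: (leP c0 h0) => hc0.
  by right; split => //; rewrite ge_min lexx.
by left; rewrite ge_min; apply/orP; right.
Qed.

Lemma posp_min_step (c0 c1 h0 h1 : R) : h1 <= h0 ->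
  posp (Num.min c1 h1 - Num.min c0 h0) <= posp (c1 - c0).
Proof.
move=> h10.
case: (posp_cases (c1 - c0)) => -[? ->];
case: (posp_cases (Num.min c1 h1 - Num.min c0 h0)) => -[? ->];
case: (min_step_cases c0 c1 h10) => [?|[? ?]]; lra.
Qed.

Section CappedDifference.
Variables (a b h m : nat -> R) (n : nat).
Hypothesis a_incr : forall k, (k < n)%N -> a k <= a k.+1.
Hypothesis b_incr : forall k, (k < n)%N -> b k <= b k.+1.
Hypothesis h_decr : forall k, (k < n)%N -> h k.+1 <= h k.
Hypothesis m_def : forall k, (k <= n)%N -> m k = Num.min (a k - b k) (h k).

Lemma posvar_capped_le_incr :
  \sum_(i < n) posp (m i.+1 - m i) <= a n - a 0%N.
Proof.
rewrite -(telescope_sumr a (leq0n n)) big_mkord.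
apply: ler_sum => -[i /= lt_in] _.
rewrite m_def // m_def ?(ltnW lt_in) //.
apply: le_trans (posp_min_step _ _ (h_decr lt_in)) _.
have := a_incr lt_in; have := b_incr lt_in.
by case: (posp_cases (a i.+1 - b i.+1 - (a i - b i))) => -[? ->]; lra.
Qed.

(* If moreover m <= M, b <= K, a 0 >= 0 and 0 <= M + K, the positive
   variation of m is at most M + K: an increase at step j starts from
   m j = a j - b j, and the positive variation accumulated before it is at
   most a j - a 0, so after it the total is at most m (j+1) + b j - a 0. *)
Lemma posvar_capped_le_bound (M K : R) :
  0 <= M + K -> 0 <= a 0%N -> (forall k, (k <= n)%N -> m k <= M /\ b k <= K) ->
  \sum_(i < n) posp (m i.+1 - m i) <= M + K.
Proof.
move=> MK0 a00 bnd.
suff : forall j, (j <= n)%N ->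
    \sum_(i < j) posp (m i.+1 - m i) <= a j - a 0%N /\
    \sum_(i < j) posp (m i.+1 - m i) <= M + K by move/(_ n (leqnn n)) => [].
elim=> [|j IH] lt_jn; first by rewrite big_ord0; lra.
have [IHa IHb] := IH (ltnW lt_jn).
have [Mj Kj] := bnd j (ltnW lt_jn); have [Mj1 Kj1] := bnd j.+1 lt_jn.
have := a_incr lt_jn; have := b_incr lt_jn.
rewrite big_ord_recr /= !m_def ?(ltnW lt_jn) // in Mj Mj1 *.
case: (posp_cases (Num.min (a j.+1 - b j.+1) (h j.+1) - Num.min (a j - b j) (h j)))
  => -[? ->];
case: (min_step_cases (a j - b j) (a j.+1 - b j.+1) (h_decr lt_jn))
  => [?|[? ?]]; lra.
Qed.

End CappedDifference.

Lemma posp_diff_le a b : posp (posp a - posp b) <= posp (a - b).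
Proof.
move: (posp_cases a) (posp_cases b) (posp_cases (a - b)) (posp_cases (posp a - posp b))
  => [[? ?]|[? ?]] [[? ?]|[? ?]] [[? ?]|[? ?]] [[? ?]|[? ?]]; lra.
Qed.

Lemma max_diff_le (a0 a1 b0 b1 : R) :
  `|Num.max a1 b1 - Num.max a0 b0| <= `|a1 - a0| + `|b1 - b0|.
Proof.
rewrite !abs_posp.
move: (posp_cases (a1 - a0)) (posp_cases (b1 - b0))
  (posp_cases (Num.max a1 b1 - Num.max a0 b0)).
case: (leP a1 b1) => ?; case: (leP a0 b0) => ?;
  move=> [[? ?]|[? ?]] [[? ?]|[? ?]] [[? ?]|[? ?]]; lra.
Qed.

Lemma var_posp_le (m : nat -> R) n M : 0 <= M -> (forall k, (k <= n)%N -> m k <= M) ->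
  \sum_(i < n) `|posp (m i.+1) - posp (m i)| <= 2 * \sum_(i < n) posp (m i.+1 - m i) + M.
Proof.
move=> M0 m_le.
have posp_range k : (k <= n)%N -> 0 <= posp (m k) <= M.
  by move=> le_kn; have := m_le k le_kn; case: (posp_cases (m k)) => -[? ->] ?; apply/andP; lra.
apply: le_trans (var_le_posvar posp_range) _.
rewrite lerD2r ler_pM2l ?ltr0n //; apply: ler_sum => i _; exact: posp_diff_le.
Qed.

Lemma min_abs_split d h : 0 <= h ->
  Num.min `|d| h = Num.max (posp (Num.min d h)) (posp (Num.min (- d) h)).
Proof.
move=> h0; rewrite /posp.
case: (lerP 0 d) => hd; [rewrite ger0_norm // | rewrite ltr0_norm //].
- have u0 : 0 <= Num.min d h by rewrite le_min hd h0.
  have v0 : Num.min (- d) h <= 0 by rewrite ge_min; lra.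
  by rewrite (max_r v0) (max_l u0) (max_l u0).
- have u0 : 0 <= Num.min (- d) h by rewrite le_min h0 andbT; lra.
  have v0 : Num.min d h <= 0 by rewrite ge_min; lra.
  by rewrite (max_r v0) (max_l u0) (max_r u0).
Qed.

End PositiveVariation.

Section PowerSums.
Variable R : realType.

(* For rho >= 1, t |-> t^rho is superadditive on nonnegative reals: writing
   c = S (c / S) with S = a + b, one has c^rho <= S^rho (c / S). *)
Lemma powR_superadd (a b rho : R) : 0 <= a -> 0 <= b -> 1 <= rho ->
  a `^ rho + b `^ rho <= (a + b) `^ rho.
Proof.
move=> a0 b0 rho1; have rho0 : rho != 0 by apply/eqP => h; rewrite h in rho1; lra.
have [->|an0] := eqVneq a 0; first by rewrite powR0 // !add0r.
have [->|bn0] := eqVneq b 0; first by rewrite powR0 // !addr0.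
have ap : 0 < a by rewrite lt_def an0 a0.
have bp : 0 < b by rewrite lt_def bn0 b0.
set S := a + b; have Sp : 0 < S by rewrite /S; lra.
have share c : 0 < c -> c <= S -> c `^ rho <= S `^ rho * (c / S).
  move=> cp cS; have cE : c = S * (c / S) by rewrite mulrCA divff ?mulr1 // gt_eqF.
  rewrite {1}cE powRM ?divr_ge0 ?(ltW Sp) ?(ltW cp) //.
  rewrite ler_wpM2l ?powR_ge0 //.
  by apply: ge1r_powR => //; rewrite divr_gt0 //= ler_pdivrMr // mul1r.
have split_S : S `^ rho * (a / S) + S `^ rho * (b / S) = S `^ rho.
  by rewrite -mulrDr -mulrDl divff ?mulr1 // gt_eqF.
have := share a ap ltac:(rewrite /S; lra); have := share b bp ltac:(rewrite /S; lra).
lra.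
Qed.

Lemma powR_sum_le (d : nat -> R) n rho : 1 <= rho -> (forall i, 0 <= d i) ->
  (\sum_(i < n) d i `^ rho) `^ rho^-1 <= \sum_(i < n) d i.
Proof.
move=> rho1 d0; have rho0 : rho != 0 by apply/eqP => h; rewrite h in rho1; lra.
have sum_ge0 k : 0 <= \sum_(i < k) d i by apply: sumr_ge0.
have pow_sum k : \sum_(i < k) d i `^ rho <= (\sum_(i < k) d i) `^ rho.
  elim: k => [|k IH]; first by rewrite !big_ord0 powR0.
  rewrite !big_ord_recr /=.
  have := powR_superadd (sum_ge0 k) (d0 k) rho1; lra.
apply: le_trans (ge0_ler_powR _ _ _ (pow_sum n)) _.
- by rewrite invr_ge0; lra.
- by rewrite nnegrE; apply: sumr_ge0 => i _; exact: powR_ge0.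
- by rewrite nnegrE powR_ge0.
by rewrite -powRrM divff // powRr1.
Qed.

End PowerSums.

Section Kernel.
Variable R : realType.
Implicit Types x s sigma t u : R.

Definition dscale t : R := Num.sqrt (1 - expR (- (2 * t))).
Definition growth x t : R := x * (expR t - 1) / dscale t.
Definition drift s t : R := s * expR t.
Definition cap x sigma t : R := sigma / (1 + x) / dscale t.

Lemma dscale_gt0 t : 0 < t -> 0 < dscale t.
Proof. by move=> t0; rewrite /dscale sqrtr_gt0 subr_gt0 expR_lt1; lra. Qed.

Lemma dscale_sqr t : 0 < t -> dscale t ^+ 2 = 1 - (expR t ^+ 2)^-1.
Proof.
move=> t0; rewrite /dscale sqr_sqrtr; first by rewrite expRN expRM_natl.
by rewrite subr_ge0 ltW // expR_lt1; lra.
Qed.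

Lemma sqrt_expR2_sub1 t : 0 < t -> Num.sqrt (expR (2 * t) - 1) = dscale t * expR t.
Proof.
move=> t0; have D0 := dscale_gt0 t0; have E1 : 1 < expR t by rewrite expR_gt1.
have -> : expR (2 * t) - 1 = (dscale t * expR t) ^+ 2.
  by rewrite exprMn dscale_sqr // expRM_natl; field; apply: lt0r_neq0; lra.
by rewrite sqrtr_sqr ger0_norm // mulr_ge0 // ltW //; lra.
Qed.

Lemma dscale_le t u : 0 < t -> t <= u -> dscale t <= dscale u.
Proof.
move=> t0 tu; rewrite /dscale ler_sqrt; first by rewrite lerB // ler_expR; lra.
by rewrite subr_ge0 ltW // expR_lt1; lra.
Qed.

Lemma capped_ratio a k t : 0 < t ->
  Num.min `|a| k / dscale t = Num.min `|a / dscale t| (k / dscale t).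
Proof.
move=> t0; have D0 := dscale_gt0 t0.
rewrite normrM normfV (gtr0_norm D0).
by case: (leP `|a| k) => h; [rewrite min_l | rewrite min_r ?ltW];
  rewrite // ?ler_pM2r ?ltr_pM2r ?invr_gt0.
Qed.

Lemma Fplus_min x s sigma t : 0 < t ->
  Fplus x s sigma t = Num.min `|growth x t + drift s t| (cap x sigma t).
Proof.
move=> t0; rewrite /Fplus sqrt_expR2_sub1 // capped_ratio //; congr (Num.min `|_| _).
by rewrite /growth /drift; field; exact: lt0r_neq0 (dscale_gt0 t0).
Qed.

Lemma Fminus_min x s sigma t : 0 < t ->
  Fminus x s sigma t = Num.min `|growth x t - drift s t| (cap x sigma t).
Proof.
move=> t0; rewrite /Fminus sqrt_expR2_sub1 // capped_ratio //; congr (Num.min `|_| _).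
by rewrite /growth /drift; field; exact: lt0r_neq0 (dscale_gt0 t0).
Qed.

Lemma growth_ge0 x t : 0 <= x -> 0 < t -> 0 <= growth x t.
Proof.
move=> x0 t0; have D0 := dscale_gt0 t0; have E1 : 1 < expR t by rewrite expR_gt1.
by rewrite /growth divr_ge0 ?mulr_ge0 //; lra.
Qed.

Lemma growth_sqr x t : 0 < t ->
  growth x t ^+ 2 = x ^+ 2 * (expR t ^+ 2 * ((expR t - 1) / (expR t + 1))).
Proof.
move=> t0; have D0 := dscale_gt0 t0; have E1 : 1 < expR t by rewrite expR_gt1.
rewrite /growth expr_div_n exprMn dscale_sqr //; field.
by apply/and3P; split; apply: lt0r_neq0; nra.
Qed.

Lemma growth_profile_le (y z : R) : 1 < y -> y <= z ->
  y ^+ 2 * ((y - 1) / (y + 1)) <= z ^+ 2 * ((z - 1) / (z + 1)).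
Proof.
move=> y1 yz; apply: ler_pM.
- exact: sqr_ge0.
- by rewrite divr_ge0; lra.
- by rewrite ler_pXn2r // nnegrE; lra.
rewrite ler_pdivrMr; last lra.
by rewrite mulrAC ler_pdivlMr; [nra | lra].
Qed.

Lemma growth_le x t u : 0 <= x -> 0 < t -> t <= u -> growth x t <= growth x u.
Proof.
move=> x0 t0 tu; have u0 : 0 < u by lra.
have := growth_ge0 x0 t0; have := growth_ge0 x0 u0 => ? ?.
suff : growth x t ^+ 2 <= growth x u ^+ 2 by nra.
rewrite !growth_sqr // ler_wpM2l ?sqr_ge0 //.
by apply: growth_profile_le; [rewrite expR_gt1 | rewrite ler_expR].
Qed.

Lemma drift_ge0 s t : 0 <= s -> 0 <= drift s t.
Proof. by move=> s0; rewrite /drift mulr_ge0 // expR_ge0. Qed.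

Lemma drift_le s t u : 0 <= s -> t <= u -> drift s t <= drift s u.
Proof. by move=> s0 tu; rewrite /drift ler_wpM2l // ler_expR. Qed.

Lemma drift_le_e s t : 0 <= s -> t <= 1 -> drift s t <= s * expR 1.
Proof. by move=> s0 t1; rewrite /drift ler_wpM2l // ler_expR. Qed.

Lemma cap_ge0 x sigma t : 0 <= x -> 0 <= sigma -> 0 < t -> 0 <= cap x sigma t.
Proof.
move=> x0 s0 t0; have D0 := dscale_gt0 t0.
by rewrite /cap !divr_ge0 //; lra.
Qed.

Lemma cap_le x sigma t u : 0 <= x -> 0 <= sigma -> 0 < t -> t <= u ->
  cap x sigma u <= cap x sigma t.
Proof.
move=> x0 s0 t0 tu; have Dt := dscale_gt0 t0.
have Du : 0 < dscale u by apply: dscale_gt0; lra.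
rewrite /cap ler_wpM2l //; first by rewrite divr_ge0 //; lra.
by rewrite lef_pV2 ?posrE // dscale_le.
Qed.

Lemma growth_cap x sigma t : 0 <= x -> 0 < t ->
  growth x t * cap x sigma t = (x * (sigma / (1 + x))) * (expR t ^+ 2 / (expR t + 1)).
Proof.
move=> x0 t0; have D0 := dscale_gt0 t0; have E1 : 1 < expR t by rewrite expR_gt1.
have -> : growth x t * cap x sigma t =
   x * (expR t - 1) * (sigma / (1 + x)) / (dscale t ^+ 2).
  by rewrite /growth /cap; field; repeat (apply/andP; split); apply: lt0r_neq0; nra.
rewrite dscale_sqr //; field.
by repeat (apply/andP; split); apply: lt0r_neq0; nra.
Qed.

(* Geometric-mean bound: min(g, c)^2 <= g c <= e^t <= e on (0, 1]. *)
Lemma min_growth_cap_le x sigma t : 0 <= x -> 0 <= sigma -> sigma < 1 ->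
  0 < t -> t <= 1 -> Num.min (growth x t) (cap x sigma t) <= expR 1.
Proof.
move=> x0 s0 s1 t0 t1.
have E1 : 1 < expR t by rewrite expR_gt1.
have Ee : expR t <= expR 1 by rewrite ler_expR.
have coef : x * (sigma / (1 + x)) <= 1 by rewrite mulrA ler_pdivrMr; nra.
have coef0 : 0 <= x * (sigma / (1 + x)) by rewrite mulr_ge0 // divr_ge0 //; lra.
have prof : expR t ^+ 2 / (expR t + 1) <= expR t by rewrite ler_pdivrMr; nra.
have prof0 : 0 <= expR t ^+ 2 / (expR t + 1) by rewrite divr_ge0 ?sqr_ge0 //; lra.
have := growth_cap sigma x0 t0.
have := growth_ge0 x0 t0; have := cap_ge0 x0 s0 t0.
set g := growth x t; set c := cap x sigma t => c0 g0 gc.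
have prod1 : x * (sigma / (1 + x)) * (expR t ^+ 2 / (expR t + 1)) <= 1 * expR t.
  exact: ler_pM.
case: (leP g c) => ?; nra.
Qed.

Lemma Fplus_bound x s sigma t : 0 <= x -> 0 <= s -> 0 <= sigma -> sigma < 1 ->
  0 < t -> t <= 1 ->
  Fplus x s sigma t = Num.min (growth x t + drift s t) (cap x sigma t) /\
  0 <= Fplus x s sigma t <= expR 1 * (s + 1).
Proof.
move=> x0 s0 g0 g1 t0 t1.
have g_ge0 := growth_ge0 x0 t0; have d_ge0 := drift_ge0 t s0.
have c_ge0 := cap_ge0 x0 g0 t0; have d_le := drift_le_e s0 t1.
have := min_growth_cap_le x0 g0 g1 t0 t1.
rewrite Fplus_min // ger0_norm; last lra.
move=> gc_le; split => //.
move: gc_le; case: (leP (growth x t + drift s t)) => ?; case: (leP (growth x t)) => ? ?;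
  apply/andP; split; nra.
Qed.

(* F_- <= F_+ since |g - d| <= g + d, hence the same bound holds for F_-. *)
Lemma Fminus_bound x s sigma t : 0 <= x -> 0 <= s -> 0 <= sigma -> sigma < 1 ->
  0 < t -> t <= 1 -> 0 <= Fminus x s sigma t <= expR 1 * (s + 1).
Proof.
move=> x0 s0 g0 g1 t0 t1.
have [Fp /andP[_ Fp_le]] := Fplus_bound x0 s0 g0 g1 t0 t1.
have := growth_ge0 x0 t0; have := drift_ge0 t s0 => ? ?.
rewrite Fminus_min // le_min normr_ge0 cap_ge0 //=.
apply: le_trans Fp_le; rewrite Fp le_min !ge_min lexx orbT andbT.
by apply/orP; left; apply/ler_normlP; split; lra.
Qed.

End Kernel.

Section SampledVariation.
Variable R : realType.
Variables (x s sigma : R) (t : nat -> R) (n : nat).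
Hypotheses (x_ge0 : 0 <= x) (s_ge0 : 0 <= s) (sigma_ge0 : 0 <= sigma) (sigma_lt1 : sigma < 1).
Hypothesis t_range : forall k, (k <= n)%N -> 0 < t k /\ t k <= 1.
Hypothesis t_incr : forall k, (k < n)%N -> t k <= t k.+1.

Let g k := growth x (t k).
Let d k := drift s (t k).
Let c k := cap x sigma (t k).

Let g_incr k : (k < n)%N -> g k <= g k.+1.
Proof. by move=> lt_kn; apply: growth_le => //; [exact: (t_range (ltnW lt_kn)).1 | exact: t_incr]. Qed.

Let d_incr k : (k < n)%N -> d k <= d k.+1.
Proof. by move=> lt_kn; apply: drift_le => //; exact: t_incr. Qed.

Let c_decr k : (k < n)%N -> c k.+1 <= c k.
Proof. by move=> lt_kn; apply: cap_le => //; [exact: (t_range (ltnW lt_kn)).1 | exact: t_incr]. Qed.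

Let bound_ge0 : 0 <= expR 1 * (s + 1).
Proof. by apply: mulr_ge0; [exact: expR_ge0 | have := s_ge0; lra]. Qed.

(* F_+ = min(g + d, c) is a capped sum of nondecreasing terms, bounded by
   e (s + 1); its variation is at most 3 e (s + 1). *)
Lemma Fplus_sample_var :
  \sum_(i < n) `|Fplus x s sigma (t i.+1) - Fplus x s sigma (t i)| <= 8 * expR 1 * (s + 1).
Proof.
have F_bnd k : (k <= n)%N ->
    Fplus x s sigma (t k) = Num.min (g k + d k - 0) (c k) /\
    0 <= Fplus x s sigma (t k) <= expR 1 * (s + 1).
  move=> le_kn; have [t0 t1] := t_range le_kn.
  by rewrite subr0; exact: Fplus_bound.
have var := var_le_posvar (fun k le_kn => (F_bnd k le_kn).2).
have MK_ge0 : 0 <= expR 1 * (s + 1) + 0 by rewrite addr0.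
have a0_ge0 : 0 <= g 0%N + d 0%N.
  have t0 := (t_range (leq0n n)).1; exact: addr_ge0 (growth_ge0 x_ge0 t0) (drift_ge0 _ s_ge0).
have posvar := posvar_capped_le_bound (a := fun k => g k + d k) (b := fun=> 0)
  (fun k lt_kn => lerD (g_incr lt_kn) (d_incr lt_kn)) (fun k _ => lexx 0) c_decr
  (fun k le_kn => (F_bnd k le_kn).1) MK_ge0 a0_ge0
  (fun k le_kn => conj (proj2 (andP (F_bnd k le_kn).2)) (lexx 0)).
have := bound_ge0; simpl in var, posvar; lra.
Qed.

(* F_- = max(u^+, v^+) with u = min(g - d, c) <= e and v = min(d - g, c) <= s e. *)
Let u k := Num.min (g k - d k) (c k).
Let v k := Num.min (d k - g k) (c k).

Let g_ge0 k : (k <= n)%N -> 0 <= g k.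
Proof. by move=> le_kn; apply: growth_ge0 => //; exact: (t_range le_kn).1. Qed.

Let d_range k : (k <= n)%N -> 0 <= d k <= s * expR 1.
Proof. by move=> le_kn; rewrite drift_ge0 //= drift_le_e // (t_range le_kn).2. Qed.

Let u_le k : (k <= n)%N -> u k <= expR 1.
Proof.
move=> le_kn; have [t0 t1] := t_range le_kn; have /andP[? ?] := d_range le_kn.
apply: le_trans (min_growth_cap_le x_ge0 sigma_ge0 sigma_lt1 t0 t1).
by rewrite le_min !ge_min lexx orbT andbT; apply/orP; left; rewrite /g; lra.
Qed.

Let v_le k : (k <= n)%N -> v k <= s * expR 1.
Proof.
move=> le_kn; have := d_range le_kn; have := g_ge0 le_kn => ? /andP[? ?].
by rewrite ge_min; apply/orP; left; lra.
Qed.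

Let Fminus_split k : (k <= n)%N -> Fminus x s sigma (t k) = Num.max (posp (u k)) (posp (v k)).
Proof.
move=> le_kn; have t0 := (t_range le_kn).1.
by rewrite Fminus_min // min_abs_split ?cap_ge0 // opprB.
Qed.

(* u^+ varies by at most 2 (e + s e) + e and v^+ by at most 2 s e + s e. *)
Lemma Fminus_sample_var :
  \sum_(i < n) `|Fminus x s sigma (t i.+1) - Fminus x s sigma (t i)| <= 8 * expR 1 * (s + 1).
Proof.
have e_ge0 : 0 <= expR (1 : R) := expR_ge0 1.
have se_ge0 : 0 <= s * expR 1 by rewrite mulr_ge0.
have split_var : \sum_(i < n) `|Fminus x s sigma (t i.+1) - Fminus x s sigma (t i)| <=
    \sum_(i < n) `|posp (u i.+1) - posp (u i)| + \sum_(i < n) `|posp (v i.+1) - posp (v i)|.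
  rewrite -big_split /=; apply: ler_sum => -[i lt_in] _ /=.
  by rewrite !Fminus_split ?max_diff_le // ltnW.
have var_u := var_posp_le e_ge0 u_le.
have var_v := var_posp_le se_ge0 v_le.
have MK_ge0 : 0 <= expR 1 + s * expR 1 by rewrite addr_ge0.
have posvar_u := posvar_capped_le_bound g_incr d_incr c_decr (fun k _ => erefl (u k))
  MK_ge0 (g_ge0 (leq0n n))
  (fun k le_kn => conj (u_le le_kn) (proj2 (andP (d_range le_kn)))).
have posvar_v := posvar_capped_le_incr d_incr g_incr c_decr (fun k _ => erefl (v k)).
have /andP[? ?] := d_range (leq0n n); have /andP[? ?] := d_range (leqnn n).
lra.
Qed.

End SampledVariation.

Local Open Scope classical_set_scope.

Lemma Tcut_le1 (R : realType) (x s sigma : R) : Tcut x s sigma <= 1.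
Proof.
rewrite /Tcut; set S := [set t : R | _].
have [[t0 St0]|S0] := pselect (S !=set0).
  by apply: ge_sup; [exists t0 | move=> y [/andP[_ ?] _]].
have -> : S = set0 by apply/seteqP; split => y // Sy; apply: S0; exists y.
by rewrite sup0 ler01.
Qed.

Lemma supabs_le (R : realType) (phi : R -> R) (I : set R) (B : R) :
  (forall t, I t -> 0 <= phi t <= B) -> (supabs phi I <= B%:E)%E.
Proof.
move=> bnd; apply: ge_ereal_sup => _ [t It <-].
by have /andP[? ?] := bnd t It; rewrite lee_fin ger0_norm.
Qed.

Lemma pvar_le (R : realType) (rho : R) (phi : R -> R) (I : set R) (B : R) :
  1 <= rho ->
  (forall n (t : nat -> R), (forall k, (k <= n)%N -> I (t k)) ->
     (forall k, (k < n)%N -> t k < t k.+1) ->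
     \sum_(i < n) `|phi (t i.+1) - phi (t i)| <= B) ->
  (pvar rho phi I <= B%:E)%E.
Proof.
move=> rho1 var; apply: ge_ereal_sup => _ [n [t [tI [t_incr ->]]]]; rewrite lee_fin.
apply: le_trans (var n t tI t_incr).
exact: (powR_sum_le (d := fun i => `|phi (t i.+1) - phi (t i)|) n rho1
  (fun i => normr_ge0 _)).
Qed.

Theorem lemma5p4 (R : realType) :
  exists C : R, forall x s sigma rho : R,
    0 <= x -> 0 < s -> 1 / 2 < sigma < 1 -> 1 <= rho ->
    let T := Tcut x s sigma in
    [/\ (supabs (Fplus x s sigma) [set t : R | (0 < t <= T)%R] <= (C * (s + 1))%:E)%E,
        (supabs (Fminus x s sigma) [set t : R | (0 < t <= T)%R] <= (C * (s + 1))%:E)%E,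
        (pvar rho (Fplus x s sigma) [set t : R | (0 < t <= T)%R] <= (C * (s + 1))%:E)%E &
        (pvar rho (Fminus x s sigma) [set t : R | (0 < t <= T)%R] <= (C * (s + 1))%:E)%E].
Proof.
exists (8 * expR 1) => x s sigma rho x0 s_gt0 /andP[sigma_gt sigma1] rho1 T.
have sigma0 : 0 <= sigma by lra.
have s0 : 0 <= s by lra.
have in01 (t : R) : 0 < t <= T -> 0 < t /\ t <= 1.
  by move=> /andP[t0 tT]; split => //; apply: le_trans tT (Tcut_le1 _ _ _).
have weaken (B : R) : 0 <= B <= expR 1 * (s + 1) -> 0 <= B <= 8 * expR 1 * (s + 1).
  move=> /andP[? ?]; have := expR_ge0 (1 : R) => ?; apply/andP; split; nra.
split.
- apply: supabs_le => t /in01[t0 t1]; apply: weaken.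
  exact: (Fplus_bound x0 s0 sigma0 sigma1 t0 t1).2.
- apply: supabs_le => t /in01[t0 t1]; apply: weaken.
  exact: Fminus_bound x0 s0 sigma0 sigma1 t0 t1.
- apply: pvar_le => // n t tI t_incr.
  by apply: Fplus_sample_var => // [k /tI /in01 | k /t_incr /ltW].
- apply: pvar_le => // n t tI t_incr.
  by apply: Fminus_sample_var => // [k /tI /in01 | k /t_incr /ltW].
Qed.
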